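(* Let $Q$ be a probability measure on $\mathcal Z$ and $P_1,P_2\ll Q$ probability measures with densities $\rho_j=\frac{\mathrm dP_j}{\mathrm dQ}$ such that, for some $\varepsilon\ge0$, $\delta\ge0$, $$\int\max\{\rho_1-e^{\varepsilon}\rho_2,0\}\,\mathrm dQ\le\delta\quad\text{and}\quad\int\max\{\rho_2-e^{\varepsilon}\rho_1,0\}\,\mathrm dQ\le\delta.$$ Then there exists a probability measure $P_3\ll Q$ such that $d_{\mathrm{TV}}(P_1,P_3)\le\delta$ and $e^{-\varepsilon}\frac{\mathrm dP_2}{\mathrm dQ}(z)\le\frac{\mathrm dP_3}{\mathrm dQ}(z)\le e^{\varepsilon}\frac{\mathrm dP_2}{\mathrm dQ}(z)$ for $Q$-almost every $z$.
   Context: $d_{\mathrm{TV}}(P,P')=\sup_S|P(S)-P'(S)|=\int\max\{\frac{\mathrm dP}{\mathrm dQ}-\frac{\mathrm dP'}{\mathrm dQ},0\}\,\mathrm dQ$. *)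

From HB Require Import structures.
From mathcomp Require Import all_boot all_order all_algebra.
From mathcomp Require Import all_classical all_reals all_analysis.
Set Implicit Arguments. Unset Strict Implicit. Unset Printing Implicit Defensive.
Import Order.TTheory GRing.Theory Num.Theory.
Local Open Scope classical_set_scope.
Local Open Scope ring_scope.
Local Open Scope ereal_scope.

Definition dTV d (T : measurableType d) (R : realType)
  (P P' : set T -> \bar R) : \bar R :=
  ereal_sup [set `|P S - P' S| | S in [set S | measurable S]].

Definition is_density d (T : measurableType d) (R : realType)
  (Q : {measure set T -> \bar R}) (P : set T -> \bar R) (rho : T -> R) : Prop :=
  [/\ measurable_fun setT rho, (forall z, (0 <= rho z)%R) &
      forall A, measurable A -> P A = \int[Q]_(z in A) (rho z)%:E].

From HB Require Import structures.
From mathcomp Require Import all_boot all_order all_algebra.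
From mathcomp Require Import all_classical all_reals all_analysis.
From mathcomp Require Import ring lra measurable_realfun.
Set Implicit Arguments. Unset Strict Implicit. Unset Printing Implicit Defensive.
Import Order.TTheory GRing.Theory Num.Theory.
Local Open Scope classical_set_scope.
Local Open Scope ring_scope.

(** Clip [rho1] into the band [[e^-eps rho2, e^eps rho2]].  The clipped
    function [c] exceeds [rho1] by at most [(e^-eps rho2 - rho1)^+] and falls
    below it by at most [(rho1 - e^eps rho2)^+].  If its mass [I] is at most [1],
    mix it with the upper edge [e^eps rho2], otherwise with the lower edge
    [e^-eps rho2], so as to get mass [1]: the mixture stays in the band and lies
    above [c] in the first case, below [c] in the second, so [P1 - P3]
    (resp. [P3 - P1]) is bounded on every set by the integral of the
    first (resp. second, after scaling by [e^-eps <= 1]) hypothesis. *)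

Section probability_of_density.
Local Open Scope ereal_scope.
Context d (T : measurableType d) (R : realType) (Q : {measure set T -> \bar R}).
Variables (f : T -> R) (mf : measurable_fun setT f) (f_ge0 : forall x, (0 <= f x)%R)
  (f_int1 : \int[Q]_x (f x)%:E = 1).

(* The unused proof arguments make the probability instance below canonical. *)
Definition density_probability of measurable_fun setT f & (forall x, (0 <= f x)%R)
  & \int[Q]_x (f x)%:E = 1 : set T -> \bar R := fun A => \int[Q]_(x in A) (f x)%:E.

Local Notation nu := (density_probability mf f_ge0 f_int1).

Let density_probability0 : nu set0 = 0.
Proof. by rewrite /density_probability integral_set0. Qed.

Let density_probability_ge0 A : 0 <= nu A.
Proof. by apply: integral_ge0 => x _; rewrite lee_fin. Qed.

Let density_probability_sigma_additive : semi_sigma_additive nu.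
Proof. by apply: semi_sigma_additive_nng_induced => //; exact/measurable_EFinP. Qed.

HB.instance Definition _ := isMeasure.Build _ _ _ nu
  density_probability0 density_probability_ge0 density_probability_sigma_additive.

Let density_probability_setT : nu setT = 1.
Proof. exact: f_int1. Qed.

HB.instance Definition _ :=
  @Measure_isProbability.Build _ _ R nu density_probability_setT.

Lemma density_probability_ac : nu `<< Q.
Proof.
move=> N QN A mA AN; rewrite /density_probability null_set_integral //.
- exact/measurable_EFinP/measurable_funTS.
- exact: QN.
Qed.

Lemma is_density_probability : is_density Q nu f.
Proof. by split. Qed.

End probability_of_density.

Section total_variation.
Local Open Scope ereal_scope.
Context d (T : measurableType d) (R : realType).

Lemma dTVC (P P' : probability T R) : dTV P P' = dTV P' P.
Proof.
rewrite /dTV; congr ereal_sup; apply/seteqP; split => _ [S mS <-];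
  exists S => //;
  rewrite -(fineK (fin_num_measure P S mS)) -(fineK (fin_num_measure P' S mS));
  by rewrite -!EFinB !abse_EFin distrC.
Qed.

(* A one-sided bound on all sets is two-sided: apply it to [~` S] as well. *)
Lemma dTV_le_one_sided (P P' : probability T R) (delta : R) :
  (forall S, measurable S -> P S <= P' S + delta%:E) -> dTV P P' <= delta%:E.
Proof.
move=> PP'; apply: ge_ereal_sup => _ [S mS <-].
have := PP' S mS; have := PP' _ (measurableC mS); rewrite !probability_setC //.
rewrite -(fineK (fin_num_measure P S mS)) -(fineK (fin_num_measure P' S mS)).
move: (fine (P S)) (fine (P' S)) => p p' hC hS.
rewrite -[1]/(1%:E) -!EFinB -!EFinD !lee_fin in hC hS.
by rewrite -EFinB abse_EFin lee_fin ler_norml; apply/andP; split; lra.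
Qed.

Lemma dTV_le_density_excess (Q : {measure set T -> \bar R}) (P P' : probability T R)
    (f f' g : T -> R) (delta : R) :
  is_density Q P f -> is_density Q P' f' ->
  measurable_fun setT g -> (forall z, (0 <= g z)%R) ->
  \int[Q]_z (g z)%:E <= delta%:E ->
  (forall z, (f z <= f' z + g z)%R) -> dTV P P' <= delta%:E.
Proof.
move=> [mf f_ge0 Pf] [mf' f'_ge0 P'f'] mg g_ge0 int_g ff'.
apply: dTV_le_one_sided => S mS; rewrite Pf // P'f' //.
have mfS (h : T -> R) : measurable_fun setT h -> measurable_fun S (EFin \o h).
  by move=> mh; apply/measurable_EFinP/measurable_funTS.
have ge0S (h : T -> R) : (forall z, (0 <= h z)%R) -> forall z, S z -> 0 <= (h z)%:E.
  by move=> h_ge0 z _; rewrite lee_fin.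
apply: (@le_trans _ _ (\int[Q]_(z in S) ((f' z)%:E + (g z)%:E))).
  apply: ge0_le_integral => //.
  - exact: ge0S.
  - exact: mfS.
  - by apply: emeasurable_funD; exact: mfS.
  - by move=> z _; rewrite -EFinD lee_fin.
rewrite ge0_integralD //; [| exact: ge0S | exact: mfS | exact: ge0S | exact: mfS].
apply: leeD => //; apply: le_trans int_g.
by apply: ge0_subset_integral => //; [exact/measurable_EFinP | move=> z _; rewrite lee_fin].
Qed.

End total_variation.

Lemma ge0_integralZl_fun d (T : measurableType d) (R : realType)
    (Q : {measure set T -> \bar R}) (k : R) (f : T -> R) :
  0 <= k -> measurable_fun setT f -> (forall z, 0 <= f z) ->
  (\int[Q]_z (k * f z)%:E = k%:E * \int[Q]_z (f z)%:E)%E.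
Proof.
move=> k_ge0 mf f_ge0; under eq_integral do rewrite EFinM.
by apply: ge0_integralZl_EFin => //; [move=> z _; rewrite lee_fin | exact/measurable_EFinP].
Qed.

Section real_facts.
Context {R : realType}.

Lemma clamp_facts (r a b : R) : a <= b ->
  let c := Num.min (Num.max r a) b in
  [/\ a <= c, c <= b, r - c <= Num.max (r - b) 0 & c - r <= Num.max (a - r) 0].
Proof.
move=> ab /=; rewrite /Num.max /Num.min /Order.max /Order.min.
by repeat case: ifP; move=> *; split; lra.
Qed.

Lemma maxr0_scale_le (s x : R) : 0 < s <= 1 -> Num.max (s * x) 0 <= Num.max x 0.
Proof.
move=> /andP[s_gt0 s_le1]; rewrite /Num.max /Order.max.
by repeat case: ifP; move=> *; nra.
Qed.

Lemma divr_in01 (x y : R) : 0 <= x <= y -> 0 <= x / y <= 1.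
Proof.
move=> /andP[x_ge0 xy]; have [->|y_neq0] := eqVneq y 0.
  by rewrite invr0 mulr0 lexx ler01.
have y_gt0 : 0 < y by rewrite lt_neqAle eq_sym y_neq0 (le_trans x_ge0).
by rewrite divr_ge0 ?(ltW y_gt0) // ler_pdivrMr // mul1r.
Qed.

(* The weight [t] with [(1 - t) * I + t * k = 1]; if [I = k = 1] it is [0/0 = 0]. *)
Definition normalizing_weight (I k : R) := (1 - I) / (k - I).

Lemma normalizing_weight_in01 (I k : R) : (I <= 1 <= k) || (k <= 1 <= I) ->
  0 <= normalizing_weight I k <= 1.
Proof.
rewrite /normalizing_weight => /orP[] /andP[? ?].
  by apply: divr_in01; apply/andP; split; lra.
by rewrite -divrNN; apply: divr_in01; apply/andP; split; lra.
Qed.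

Lemma normalizing_weightE (I k : R) : (I <= 1 <= k) || (k <= 1 <= I) ->
  (1 - normalizing_weight I k) * I + normalizing_weight I k * k = 1.
Proof.
rewrite /normalizing_weight => Ik; have [kI|kI] := eqVneq (k - I) 0.
  have -> : I = 1 by case/orP: Ik => /andP[? ?]; lra.
  by rewrite subrr !mul0r subr0 !mul1r addr0.
by field.
Qed.

End real_facts.

Section band_projection.
Context d (Z : measurableType d) (R : realType) (Q : {measure set Z -> \bar R}).
Variables (rho1 rho2 : Z -> R) (eps : R).
Hypotheses (eps_ge0 : 0 <= eps)
  (m1 : measurable_fun setT rho1) (m2 : measurable_fun setT rho2)
  (rho2_ge0 : forall z, 0 <= rho2 z) (int_rho2 : (\int[Q]_z (rho2 z)%:E = 1)%E).

Let ee := expR eps.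
Let ei := expR (- eps).

Let ee_ge1 : 1 <= ee. Proof. by rewrite /ee -expR0 ler_expR. Qed.
Let ei_gt0 : 0 < ei. Proof. exact: expR_gt0. Qed.
Let ei_le1 : ei <= 1. Proof. by rewrite /ei -expR0 ler_expR oppr_le0. Qed.
Let eiee : ei * ee = 1.
Proof. by rewrite /ei /ee expRN mulVf // gt_eqF // expR_gt0. Qed.

Definition band_clip z := Num.min (Num.max (rho1 z) (ei * rho2 z)) (ee * rho2 z).

Let clip_facts z := clamp_facts (rho1 z) (ler_wpM2r (rho2_ge0 z) (le_trans ei_le1 ee_ge1)).

Let measurable_scale2 (k : R) : measurable_fun setT (fun z => k * rho2 z).
Proof. exact/measurable_funM/m2/measurable_cst. Qed.

Let measurable_band_clip : measurable_fun setT band_clip.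
Proof. by apply: measurable_minr => //; apply: measurable_maxr. Qed.

Let band_clip_ge0 z : 0 <= band_clip z.
Proof.
have [lo _ _ _] := clip_facts z.
by apply: le_trans lo; exact: mulr_ge0 (ltW ei_gt0) (rho2_ge0 z).
Qed.

Definition band_mass := fine (\int[Q]_z (band_clip z)%:E).

Let band_massE : (\int[Q]_z (band_clip z)%:E = band_mass%:E)%E.
Proof.
have le_ee : (\int[Q]_z (band_clip z)%:E <= ee%:E)%E.
  rewrite -[ee]mulr1 EFinM -int_rho2 -ge0_integralZl_fun ?(le_trans ler01) //.
  apply: ge0_le_integral => //.
  - by move=> z _; rewrite lee_fin.
  - exact/measurable_EFinP.
  - exact/measurable_EFinP.
  - by move=> z _; rewrite lee_fin; have [] := clip_facts z.
rewrite /band_mass fineK // ge0_fin_numE; last by apply: integral_ge0 => z _; rewrite lee_fin.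
exact: le_lt_trans le_ee (ltry _).
Qed.

Definition band_level := if band_mass <= 1 then ee else ei.

Let band_level_ok : (band_mass <= 1 <= band_level) || (band_level <= 1 <= band_mass).
Proof.
rewrite /band_level; case: ifPn => [hI | /negP hI].
  by apply/orP; left; apply/andP; split.
by apply/orP; right; apply/andP; split => //; rewrite ltW // ltNge; exact/negP.
Qed.

Let t := normalizing_weight band_mass band_level.

Let t_in01 : 0 <= t <= 1.
Proof. exact: normalizing_weight_in01 band_level_ok. Qed.

Definition band_density z := (1 - t) * band_clip z + t * (band_level * rho2 z).

Lemma measurable_band_density : measurable_fun setT band_density.
Proof. by apply: measurable_funD; apply: measurable_funM => //; exact: measurable_cst. Qed.

Lemma band_density_in_band z : ei * rho2 z <= band_density z <= ee * rho2 z.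
Proof.
have [lo hi _ _] := clip_facts z; rewrite -/(band_clip z) in lo hi.
have /andP[t_ge0 t_le1] := t_in01.
have level_in : ei * rho2 z <= band_level * rho2 z <= ee * rho2 z.
  by have := rho2_ge0 z; rewrite /band_level; case: ifP => _ ?; apply/andP; split; nra.
by case/andP: level_in => ? ?; rewrite /band_density -/t; apply/andP; split; nra.
Qed.

Lemma band_density_ge0 z : 0 <= band_density z.
Proof.
case/andP: (band_density_in_band z) => lo _; apply: le_trans lo.
exact: mulr_ge0 (ltW ei_gt0) (rho2_ge0 z).
Qed.

Lemma integral_band_density : (\int[Q]_z (band_density z)%:E = 1)%E.
Proof.
have /andP[t_ge0 t_le1] := t_in01.
have t'_ge0 : 0 <= 1 - t by rewrite subr_ge0.
have level_ge0 : 0 <= band_level.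
  by rewrite /band_level; case: ifP => _; [exact: le_trans ler01 ee_ge1 | exact: ltW].
rewrite /band_density; under eq_integral do rewrite EFinD.
rewrite ge0_integralD //.
- rewrite ge0_integralZl_fun // ge0_integralZl_fun //; last by move=> z; rewrite mulr_ge0.
  rewrite ge0_integralZl_fun // int_rho2 band_massE mule1 -!EFinM -EFinD.
  by rewrite normalizing_weightE.
- by move=> z _; rewrite lee_fin mulr_ge0.
- exact/measurable_EFinP/measurable_funM/measurable_band_clip/measurable_cst.
- by move=> z _; rewrite lee_fin; apply: mulr_ge0 => //; exact: mulr_ge0.
- exact/measurable_EFinP/measurable_funM/measurable_scale2/measurable_cst.
Qed.

Lemma band_density_lower_excess z : band_mass <= 1 ->
  rho1 z <= band_density z + Num.max (rho1 z - ee * rho2 z) 0.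
Proof.
move=> mass_le1; have [lo hi excess _] := clip_facts z.
rewrite -/(band_clip z) in lo hi excess.
have /andP[t_ge0 t_le1] := t_in01.
by rewrite /band_density -/t /band_level mass_le1; nra.
Qed.

Lemma band_density_upper_excess z : 1 < band_mass ->
  band_density z <= rho1 z + Num.max (rho2 z - ee * rho1 z) 0.
Proof.
move=> mass_gt1; have [lo hi _ excess] := clip_facts z.
rewrite -/(band_clip z) in lo hi excess.
have /andP[t_ge0 t_le1] := t_in01.
have scaled : Num.max (ei * rho2 z - rho1 z) 0 <= Num.max (rho2 z - ee * rho1 z) 0.
  have -> : ei * rho2 z - rho1 z = ei * (rho2 z - ee * rho1 z).
    by rewrite mulrBr mulrA eiee mul1r.
  by rewrite maxr0_scale_le // ei_gt0 ei_le1.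
rewrite /band_density -/t /band_level (leNgt band_mass) mass_gt1 /=; nra.
Qed.

End band_projection.

Theorem mainTheorem13 (d : measure_display) (Z : measurableType d) (R : realType)
  (Q P1 P2 : probability Z R) (rho1 rho2 : Z -> R) (eps delta : R) :
  (0 <= eps) -> (0 <= delta) ->
  P1 `<< Q -> P2 `<< Q ->
  is_density Q P1 rho1 -> is_density Q P2 rho2 ->
  (\int[Q]_z (Num.max (rho1 z - expR eps * rho2 z) 0)%:E <= delta%:E)%E ->
  (\int[Q]_z (Num.max (rho2 z - expR eps * rho1 z) 0)%:E <= delta%:E)%E ->
  exists (P3 : probability Z R) (rho3 : Z -> R),
    [/\ P3 `<< Q, is_density Q P3 rho3,
        (dTV P1 P3 <= delta%:E)%E &
        {ae Q, forall z, expR (- eps) * rho2 z <= rho3 z <= expR eps * rho2 z}].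
Proof.
move=> eps_ge0 _ _ _ dens1 dens2 excess12 excess21.
have [m1 _ _] := dens1; have [m2 rho2_ge0 P2E] := dens2.
have int_rho2 : (\int[Q]_z (rho2 z)%:E = 1)%E by rewrite -(probability_setT P2) P2E.
pose rho3 := band_density Q rho1 rho2 eps.
pose P3 := density_probability (measurable_band_density Q eps m1 m2)
  (band_density_ge0 Q rho1 eps_ge0 rho2_ge0) (integral_band_density eps_ge0 m1 m2 rho2_ge0 int_rho2).
have dens3 : is_density Q P3 rho3 by exact: is_density_probability.
have mexcess (f g : Z -> R) : measurable_fun setT f -> measurable_fun setT g ->
    measurable_fun setT (fun z => Num.max (f z - expR eps * g z) 0).
  move=> mf mg; apply: measurable_maxr => //.
  by apply: measurable_funB => //; exact/measurable_funM/mg/measurable_cst.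
exists P3, rho3; split.
- exact: density_probability_ac.
- exact: dens3.
- have [mass_le1|mass_gt1] := leP (band_mass Q rho1 rho2 eps) 1.
    apply: (dTV_le_density_excess dens1 dens3 (mexcess _ _ m1 m2)) excess12 _ => //.
      by move=> z; rewrite le_max lexx orbT.
    by move=> z; exact: band_density_lower_excess.
  rewrite dTVC; apply: (dTV_le_density_excess dens3 dens1 (mexcess _ _ m2 m1)) excess21 _.
    by move=> z; rewrite le_max lexx orbT.
  by move=> z; exact: band_density_upper_excess.
- by apply: aeW => z; exact: band_density_in_band.
Qed.
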